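(* Consider two coplanar ellipses with a common focus at the origin of $\mathbb{R}^2$, parametrized by their true anomalies $f_1,f_2$: \[ \mathcal{X}_1(f_1)=\frac{p_1}{1+e_1\cos f_1}(\cos f_1,\ \sin f_1),\qquad \mathcal{X}_2(f_2)=\frac{p_2}{1+e_2\cos f_2}\bigl(\cos(f_2+\omega_2),\ \sin(f_2+\omega_2)\bigr), \] with $p_1,p_2>0$, $e_1,e_2\in[0,1)$, $\omega_2\in\mathbb{R}$, and let $d^2(f_1,f_2)=|\mathcal{X}_1(f_1)-\mathcal{X}_2(f_2)|^2$ on the torus $(\mathbb{R}/2\pi\mathbb{Z})^2$. Then, in general (i.e. for generic values of $p_1,p_2,e_1,e_2,\omega_2$), the function $d^2$ has at most $10$ critical points that do not correspond to trajectory intersections (points with $d^2(f_1,f_2)=0$), and hence at most $12$ critical points in total.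
   Context: A critical point of $d^2$ is a point $(f_1,f_2)$ where both partial derivatives of $d^2$ vanish; a trajectory intersection is a critical point with $d^2(f_1,f_2)=0$. *)

From Stdlib Require Import Reals List.
From Coquelicot Require Import Coquelicot.
Open Scope R_scope.

Definition X1 (p1 e1 f1 : R) : R * R :=
  (p1 / (1 + e1 * cos f1) * cos f1, p1 / (1 + e1 * cos f1) * sin f1).

Definition X2 (p2 e2 om2 f2 : R) : R * R :=
  (p2 / (1 + e2 * cos f2) * cos (f2 + om2),
   p2 / (1 + e2 * cos f2) * sin (f2 + om2)).

Definition dist2 (p1 e1 p2 e2 om2 f1 f2 : R) : R :=
  (fst (X1 p1 e1 f1) - fst (X2 p2 e2 om2 f2)) ^ 2 +
  (snd (X1 p1 e1 f1) - snd (X2 p2 e2 om2 f2)) ^ 2.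

Definition crit_pt (p1 e1 p2 e2 om2 f1 f2 : R) : Prop :=
  is_derive (fun x => dist2 p1 e1 p2 e2 om2 x f2) f1 0 /\
  is_derive (fun y => dist2 p1 e1 p2 e2 om2 f1 y) f2 0.

(* A point of the torus (R/2piZ)^2, via its representative in [0,2pi)^2. *)
Definition in_torus (f : R * R) : Prop :=
  0 <= fst f < 2 * PI /\ 0 <= snd f < 2 * PI.

Definition admissible (p1 e1 p2 e2 : R) : Prop :=
  0 < p1 /\ 0 < p2 /\ 0 <= e1 < 1 /\ 0 <= e2 < 1.

Definition mono6 : Type := (nat * nat * nat * nat * nat * nat)%type.
Definition poly6 : Type := list (R * mono6).

Definition eval_mono6 (m : mono6) (x1 x2 x3 x4 x5 x6 : R) : R :=
  match m with (a1, a2, a3, a4, a5, a6) =>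
    x1 ^ a1 * x2 ^ a2 * x3 ^ a3 * x4 ^ a4 * x5 ^ a5 * x6 ^ a6 end.

Definition eval_poly6 (Q : poly6) (x1 x2 x3 x4 x5 x6 : R) : R :=
  fold_right (fun cm acc => fst cm * eval_mono6 (snd cm) x1 x2 x3 x4 x5 x6 + acc) 0 Q.

(* Generic parameters: the parameters (p1,p2,e1,e2,cos om2,sin om2) avoid the
   zero set of a polynomial Q that does not vanish identically on the
   admissible parameter set. *)
Definition nondegenerate (Q : poly6) (p1 e1 p2 e2 om2 : R) : Prop :=
  eval_poly6 Q p1 p2 e1 e2 (cos om2) (sin om2) <> 0.

From Stdlib Require Import Reals List Lra Lia.
From Coquelicot Require Import Coquelicot.
From mathcomp Require all_boot all_algebra Rstruct.
Open Scope R_scope.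

(* At a critical point of [d^2] which is not an intersection, [X1 - X2] is orthogonal
   to both tangents, so the two points have a common unit normal [(c, s)].  Writing
   both points through [(c, s)] and their signed offsets [d1], [d2] along it, the
   condition that [X1 - X2] is parallel to [(c, s)] becomes [L d1 d2 = P d2 - Q d1],
   with [d1^2 = D1] and [d2^2 = D2] for binary forms [L, P, Q, D1, D2] in [(c, s)].
   The product over the four sign choices of [(d1, d2)] eliminates the offsets and
   leaves a form of degree 12 which is divisible by [c^2 + s^2]; the quotient has
   degree 10 and a nonzero leading coefficient, so the slope [c / s] of the normal
   takes at most 10 values.  Off the zero set of [genericity], no two sign choices
   solve the relation for the same normal, hence the slope determines the critical
   point.  At an intersection the two focal radii agree, which puts [(cos f1, sin f1)]
   on a line, and a line meets the unit circle at most twice. *)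

(** * Binary forms *)

Module BinaryForms.
Import all_boot all_algebra Rstruct.
Import GRing.Theory.

(* [F] is homogeneous of degree [n] and [F x 1] is a polynomial in [x] of degree at
   most [n] whose coefficient of [x^n] is [F 1 0]: the properties of a binary form of
   degree [n] that the root count uses. *)
Definition is_form (n : nat) (F : R -> R -> R) : Prop :=
  (forall t x y, F (t * x) (t * y) = t ^ n * F x y) /\
  exists p : {poly R}, (size p <= n.+1)%N /\ (p`_n)%R = F 1 0 /\ forall x, (p.[x])%R = F x 1.

Lemma is_form_const k : is_form 0 (fun _ _ => k).
Proof.
split=> [t x y|]; first by rewrite /= Rmult_1_l.
exists (k%:P)%R; rewrite size_polyC_leq1 coefC; split=> //; split=> // x.
by rewrite hornerC.
Qed.

Lemma is_form_fst : is_form 1 (fun x _ => x).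
Proof.
split=> [t x y|]; first by rewrite /= Rmult_1_r.
by exists ('X)%R; rewrite size_polyX coefX; split=> //; split=> // x; rewrite hornerX.
Qed.

Lemma is_form_snd : is_form 1 (fun _ y => y).
Proof.
split=> [t x y|]; first by rewrite /= Rmult_1_r.
by exists 1%R; rewrite size_poly1 coef1; split=> //; split=> // x; rewrite hornerC.
Qed.

Lemma is_form_add {n F G} :
  is_form n F -> is_form n G -> is_form n (fun x y => F x y + G x y).
Proof.
move=> [hF [p [sp [cp ep]]]] [hG [q [sq [cq eq]]]]; split=> [t x y|].
  by rewrite hF hG Rmult_plus_distr_l.
exists (p + q)%R; split.
  by apply: leq_trans (size_polyD p q) _; rewrite geq_max sp sq.
by rewrite coefD cp cq; split=> // x; rewrite hornerD ep eq.
Qed.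

Lemma is_form_opp {n F} : is_form n F -> is_form n (fun x y => - F x y).
Proof.
move=> [hF [p [sp [cp ep]]]]; split=> [t x y|].
  by rewrite hF Ropp_mult_distr_r.
exists (- p)%R; rewrite size_polyN coefN cp; split=> //; split=> // x.
by rewrite hornerN ep.
Qed.

Lemma is_form_sub {n F G} :
  is_form n F -> is_form n G -> is_form n (fun x y => F x y - G x y).
Proof. by move=> hF hG; rewrite /Rminus; apply: is_form_add hF (is_form_opp hG). Qed.

Lemma coefM_top (p q : {poly R}) m n :
  (size p <= m.+1)%N -> (size q <= n.+1)%N -> ((p * q)`_(m + n) = p`_m * q`_n)%R.
Proof.
move=> sp sq; have lt_m : (m < (m + n).+1)%N by rewrite ltnS leq_addr.
rewrite coefM (bigD1 (Ordinal lt_m)) //= addKn big1 ?addr0 // => j /eqP /val_eqP /= neq_jm.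
case: (ltngtP j m) neq_jm => // [lt_jm | lt_mj] _.
  rewrite (nth_default _ (_ : size q <= m + n - j)%N) ?mulr0 //.
  by apply: leq_trans sq _; rewrite ltn_subRL ltn_add2r.
by rewrite (nth_default _ (leq_trans sp lt_mj)) mul0r.
Qed.

Lemma is_form_mul {m n k F G} : is_form m F -> is_form n G -> (m + n)%nat = k ->
  is_form k (fun x y => F x y * G x y).
Proof.
move=> [hF [p [sp [cp ep]]]] [hG [q [sq [cq eq]]]] <-; split=> [t x y|].
  by rewrite hF hG pow_add; ring.
exists (p * q)%R; split.
  apply: leq_trans (size_polyMleq p q) _.
  by rewrite -subn1 leq_subLR add1n -addnS -addSn leq_add.
by rewrite coefM_top // cp cq; split=> // x; rewrite hornerM ep eq.
Qed.

Lemma is_form_pow {n j k F} : is_form n F -> (n * j)%nat = k ->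
  is_form k (fun x y => F x y ^ j).
Proof.
move=> hF <-; elim: j => [|j IHj]; first by rewrite muln0; exact: is_form_const.
exact: is_form_mul hF IHj (esym (mulnS n j)).
Qed.

Lemma in_seq_In (s : seq R) x : x \in s -> In x s.
Proof. by elim: s => //= y s IH; rewrite inE => /orP [/eqP ->|/IH]; [left|right]. Qed.

Lemma NoDup_uniq (s : seq R) : NoDup s -> uniq s.
Proof.
elim: s => //= x s IH /NoDup_cons_iff [x_notin nd].
by rewrite IH // andbT; apply/negP => /in_seq_In.
Qed.

Lemma is_form_roots {n F} (xs : list R) : is_form n F -> F 1 0 <> 0 -> NoDup xs ->
  (forall x, In x xs -> F x 1 = 0) -> (length xs <= n)%coq_nat.
Proof.
move=> [_ [p [sp [cp ep]]]] F10 nd xs_roots.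
have p_neq0 : (p != 0)%R by apply/eqP => p0; apply: F10; rewrite -cp p0 coef0.
have roots_p : all (root p) xs.
  by apply/allP => x /in_seq_In /xs_roots; rewrite /root ep => ->.
have := max_poly_roots p_neq0 roots_p (NoDup_uniq _ nd).
have -> : size xs = length xs by elim: xs {nd xs_roots roots_p} => //= x xs ->.
move=> lt_p; apply/ssrnat.leP; rewrite -ltnS; exact: leq_trans lt_p sp.
Qed.
End BinaryForms.

Import BinaryForms.

Ltac solve_form :=
  first
  [ eassumption
  | apply is_form_const
  | apply is_form_fst
  | apply is_form_snd
  | eapply is_form_add; [solve_form | solve_form]
  | eapply is_form_sub; [solve_form | solve_form]
  | eapply is_form_opp; solve_form
  | eapply is_form_mul; [solve_form | solve_form | reflexivity]
  | eapply is_form_pow; [solve_form | reflexivity] ].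

Lemma is_form_eq0_scale n F k x y :
  is_form n F -> k <> 0 -> F (k * x) (k * y) = 0 -> F x y = 0.
Proof.
intros [homF _] hk hF; rewrite homF in hF.
apply Rmult_integral in hF as [hkn | ->]; [now apply pow_nonzero in hkn | reflexivity].
Qed.

Lemma count_by_form n F (g : R * R -> R) (l : list (R * R)) :
  is_form n F -> F 1 0 <> 0 -> NoDup l ->
  (forall f, In f l -> F (g f) 1 = 0) ->
  (forall f f', In f l -> In f' l -> g f = g f' -> f = f') ->
  (length l <= n)%nat.
Proof.
intros hF hF10 hl hroot hinj.
rewrite <- (length_map g l); apply (is_form_roots _ hF hF10).
- apply NoDup_map_NoDup_ForallPairs; [intros f f' hf hf'; apply hinj|]; assumption.
- intros x hx; apply in_map_iff in hx as [f [<- hf]]; apply hroot, hf.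
Qed.

(** * The normal equation *)

Lemma parallel_scale u v x y :
  u ^ 2 + v ^ 2 <> 0 -> x * v - y * u = 0 -> exists k, x = k * u /\ y = k * v.
Proof.
intros huv hxy; exists ((x * u + y * v) / (u ^ 2 + v ^ 2)).
assert (hx : x * (u ^ 2 + v ^ 2) = (x * u + y * v) * u)
  by (transitivity ((x * u + y * v) * u + v * (x * v - y * u)); [ring | rewrite hxy; ring]).
assert (hy : y * (u ^ 2 + v ^ 2) = (x * u + y * v) * v)
  by (transitivity ((x * u + y * v) * v - u * (x * v - y * u)); [ring | rewrite hxy; ring]).
split; apply (Rmult_eq_reg_r (u ^ 2 + v ^ 2)); try exact huv;
  [rewrite hx | rewrite hy]; field; exact huv.
Qed.

Lemma parallel_trans dx dy ux uy vx vy :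
  dx <> 0 \/ dy <> 0 -> dx * uy - dy * ux = 0 -> dx * vy - dy * vx = 0 ->
  ux * vy - uy * vx = 0.
Proof.
intros hd hu hv.
assert (hx : dx * (ux * vy - uy * vx) = ux * (dx * vy - dy * vx) - vx * (dx * uy - dy * ux))
  by ring.
assert (hy : dy * (ux * vy - uy * vx) = uy * (dx * vy - dy * vx) - vy * (dx * uy - dy * ux))
  by ring.
rewrite hu, hv in hx, hy.
destruct hd as [hd | hd]; [apply (Rmult_eq_reg_l dx) | apply (Rmult_eq_reg_l dy)]; lra.
Qed.

Lemma cos2_sin2 x : cos x ^ 2 + sin x ^ 2 = 1.
Proof. rewrite <- (sin2_cos2 x); unfold Rsqr; ring. Qed.

Lemma focal_denominator_pos e c : 0 <= e < 1 -> c ^ 2 <= 1 -> 0 < 1 + e * c.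
Proof. intros he hc; assert (-1 <= c) by nra; nra. Qed.

Definition rotc (cw sw c s : R) := c * cw + s * sw.
Definition rots (cw sw c s : R) := s * cw - c * sw.

Lemma is_form_rotc cw sw : is_form 1 (rotc cw sw).
Proof. unfold rotc; solve_form. Qed.

Lemma is_form_rots cw sw : is_form 1 (rots cw sw).
Proof. unfold rots; solve_form. Qed.

Lemma rot_norm cw sw c s :
  cw ^ 2 + sw ^ 2 = 1 -> rotc cw sw c s ^ 2 + rots cw sw c s ^ 2 = c ^ 2 + s ^ 2.
Proof.
intros hw; unfold rotc, rots.
transitivity ((c ^ 2 + s ^ 2) * (cw ^ 2 + sw ^ 2)); [ring | rewrite hw; ring].
Qed.

Lemma unit_line_sq e c s l :
  c ^ 2 + s ^ 2 = 1 -> (l * c - e) ^ 2 + (l * s) ^ 2 = 1 -> l ^ 2 - 2 * e * c * l + e ^ 2 = 1.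
Proof.
intros hcs hl; rewrite <- hl.
transitivity (l ^ 2 * (c ^ 2 + s ^ 2) - 2 * e * c * l + e ^ 2); [rewrite hcs|]; ring.
Qed.

Lemma normal_offset_sq e c s l :
  c ^ 2 + s ^ 2 = 1 -> (l * c - e) ^ 2 + (l * s) ^ 2 = 1 ->
  (l - e * c) ^ 2 = c ^ 2 + s ^ 2 - e ^ 2 * s ^ 2.
Proof.
intros hcs hl; pose proof (unit_line_sq e c s l hcs hl) as hl'.
assert (e ^ 2 * c ^ 2 + e ^ 2 * s ^ 2 = e ^ 2)
  by (rewrite <- Rmult_plus_distr_l, hcs; ring).
rewrite hcs; lra.
Qed.

Lemma focal_identity e c s l :
  c ^ 2 + s ^ 2 = 1 -> (l * c - e) ^ 2 + (l * s) ^ 2 = 1 ->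
  (1 + e * (l * c - e)) * (l - e * c - e * c) = (1 - e ^ 2) * (l - e * c).
Proof.
intros hcs hl; pose proof (unit_line_sq e c s l hcs hl) as hl'.
transitivity ((1 - e ^ 2) * (l - e * c) + e * c * (l ^ 2 - 2 * e * c * l + e ^ 2 - 1));
  [ring | rewrite hl'; ring].
Qed.

Section NormalEquation.

Variables A B e1 e2 cw sw : R.

(* [(c1 + e1, s1) = l1 (c, s)] is orthogonal to the tangent [(- s1, c1 + e1)] of the
   first ellipse at [(c1, s1) = (cos f1, sin f1)]; likewise for the second ellipse in
   its own frame, where [(c, s)] has coordinates [(rotc, rots)]. *)
Definition on_normal (c1 s1 c2 s2 c s l1 l2 : R) : Prop :=
  c ^ 2 + s ^ 2 = 1 /\ c1 = l1 * c - e1 /\ s1 = l1 * s /\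
  c2 = l2 * rotc cw sw c s - e2 /\ s2 = l2 * rots cw sw c s.

Definition Lf c s := A * s - B * rots cw sw c s.
Definition Pf c s := A * e1 * s * c.
Definition Qf c s := B * e2 * rots cw sw c s * rotc cw sw c s.
Definition D1f c s := c ^ 2 + s ^ 2 - e1 ^ 2 * s ^ 2.
Definition D2f c s := c ^ 2 + s ^ 2 - e2 ^ 2 * rots cw sw c s ^ 2.

(* For the offsets [d1 = l1 - e1 c] and [d2 = l2 - e2 rotc] of [on_normal], this is
   the condition that [X1 - X2] is parallel to the normal [(c, s)]. *)
Definition normal_eq c s d1 d2 := Lf c s * d1 * d2 = Pf c s * d2 - Qf c s * d1.

Lemma on_normal_opp c1 s1 c2 s2 c s l1 l2 :
  on_normal c1 s1 c2 s2 c s l1 l2 -> on_normal c1 s1 c2 s2 (- c) (- s) (- l1) (- l2).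
Proof.
unfold on_normal, rotc, rots; intros (hcs & -> & -> & -> & ->).
repeat split; [rewrite <- hcs | ..]; ring.
Qed.

Lemma normal_eq_opp c s d1 d2 :
  normal_eq c s d1 d2 -> normal_eq (- c) (- s) (- d1) (- d2).
Proof. unfold normal_eq, Lf, Pf, Qf, rotc, rots; intros h; lra. Qed.

(* The product of [L d1 d2 - P d2 + Q d1] over the four sign choices [±d1, ±d2],
   written in terms of [d1 ^ 2 = D1] and [d2 ^ 2 = D2]. *)
Definition eliminant c s :=
  ((Lf c s ^ 2 * D1f c s + Pf c s ^ 2) * D2f c s - Qf c s ^ 2 * D1f c s) ^ 2
  - 4 * Lf c s ^ 2 * Pf c s ^ 2 * D2f c s ^ 2 * D1f c s.

Lemma eliminant_eq0 c s d1 d2 :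
  d1 ^ 2 = D1f c s -> d2 ^ 2 = D2f c s -> normal_eq c s d1 d2 -> eliminant c s = 0.
Proof.
unfold normal_eq, eliminant; intros <- <- h.
set (L := Lf c s); set (P := Pf c s); set (Q := Qf c s).
transitivity ((L * d1 * d2 - P * d2 + Q * d1) * (L * d1 * d2 + P * d2 - Q * d1)
  * (L * d1 * d2 - P * d2 - Q * d1) * (L * d1 * d2 + P * d2 + Q * d1)); [ring|].
replace (L * d1 * d2 - P * d2 + Q * d1) with 0 by (unfold L, P, Q; lra); ring.
Qed.

(* [eliminant = (c^2 + s^2) crit_form].  Put [u = c^2 + s^2], [a = e1 s] and
   [b = e2 rots], so that [D1 = u - a^2] and [D2 = u - b^2].  The first two terms are
   [(eliminant - E0) / u], where [E0] is the eliminant with [D1 := - a^2] and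
   [D2 := - b^2]; and [E0 = a^4 b^4 |W^2 + (B rotc)^2|^2] for [W = L + i A c], where
   the factor [W - i B rotc = (s + i c) (A - B (cw + i sw))] contributes [u]. *)
Definition crit_form c s :=
  let u := c ^ 2 + s ^ 2 in let a := e1 * s in let b := e2 * rots cw sw c s in
  (Lf c s ^ 2 * (u - a ^ 2 - b ^ 2) + Pf c s ^ 2 - Qf c s ^ 2)
  * ((Lf c s ^ 2 * D1f c s + Pf c s ^ 2) * D2f c s - Qf c s ^ 2 * D1f c s
     + (Lf c s * a * b) ^ 2 - (Pf c s * b) ^ 2 + (Qf c s * a) ^ 2)
  - 4 * Lf c s ^ 2 * Pf c s ^ 2 * ((u - b ^ 2) ^ 2 - a ^ 2 * (u - 2 * b ^ 2))
  + a ^ 4 * b ^ 4 * ((A - B * cw) ^ 2 + (B * sw) ^ 2)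
    * ((A * s - B * rots cw sw c s) ^ 2 + (A * c + B * rotc cw sw c s) ^ 2).

Lemma eliminant_factor c s : eliminant c s = (c ^ 2 + s ^ 2) * crit_form c s.
Proof. unfold eliminant, crit_form, Lf, Pf, Qf, D1f, D2f, rotc, rots; ring. Qed.

Lemma is_form_crit_form : is_form 10 crit_form.
Proof.
pose proof (is_form_rotc cw sw); pose proof (is_form_rots cw sw).
unfold crit_form, Lf, Pf, Qf, D1f, D2f; solve_form.
Qed.

Lemma crit_form_lead_coef :
  crit_form 1 0 = B ^ 4 * sw ^ 4 * (1 - e2 ^ 2 * (cw ^ 2 + sw ^ 2)) ^ 2.
Proof. unfold crit_form, Lf, Pf, Qf, D1f, D2f, rotc, rots; ring. Qed.

End NormalEquation.

Lemma on_normal_offsets e1 e2 cw sw c1 s1 c2 s2 c s l1 l2 :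
  cw ^ 2 + sw ^ 2 = 1 -> c1 ^ 2 + s1 ^ 2 = 1 -> c2 ^ 2 + s2 ^ 2 = 1 ->
  on_normal e1 e2 cw sw c1 s1 c2 s2 c s l1 l2 ->
  (l1 - e1 * c) ^ 2 = D1f e1 c s /\ (l2 - e2 * rotc cw sw c s) ^ 2 = D2f e2 cw sw c s.
Proof.
intros hw hu1 hu2 (hcs & -> & -> & -> & ->); split.
- exact (normal_offset_sq e1 c s l1 hcs hu1).
- unfold D2f; rewrite <- (rot_norm cw sw c s hw).
  apply normal_offset_sq; [rewrite rot_norm; assumption | exact hu2].
Qed.

Section CommonNormal.

Variables p1 e1 p2 e2 cw sw : R.
Hypotheses (hp1 : 0 < p1) (hp2 : 0 < p2) (he1 : 0 <= e1 < 1) (he2 : 0 <= e2 < 1)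
  (hw : cw ^ 2 + sw ^ 2 = 1).

Definition gap_x (c1 s1 c2 s2 : R) :=
  p1 / (1 + e1 * c1) * c1 - p2 / (1 + e2 * c2) * (c2 * cw - s2 * sw).
Definition gap_y (c1 s1 c2 s2 : R) :=
  p1 / (1 + e1 * c1) * s1 - p2 / (1 + e2 * c2) * (c2 * sw + s2 * cw).

Lemma common_normal c1 s1 c2 s2 :
  c1 ^ 2 + s1 ^ 2 = 1 -> c2 ^ 2 + s2 ^ 2 = 1 ->
  gap_x c1 s1 c2 s2 <> 0 \/ gap_y c1 s1 c2 s2 <> 0 ->
  gap_x c1 s1 c2 s2 * s1 - gap_y c1 s1 c2 s2 * (c1 + e1) = 0 ->
  gap_x c1 s1 c2 s2 * (c2 * sw + s2 * cw + e2 * sw)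
    - gap_y c1 s1 c2 s2 * (c2 * cw - s2 * sw + e2 * cw) = 0 ->
  exists c s l1 l2, on_normal e1 e2 cw sw c1 s1 c2 s2 c s l1 l2 /\
    gap_x c1 s1 c2 s2 * s - gap_y c1 s1 c2 s2 * c = 0.
Proof.
intros hu1 hu2 hgap hn1 hn2.
set (gx := gap_x c1 s1 c2 s2) in *; set (gy := gap_y c1 s1 c2 s2) in *.
set (n2x := c2 * cw - s2 * sw + e2 * cw); set (n2y := c2 * sw + s2 * cw + e2 * sw).
pose proof (parallel_trans gx gy (c1 + e1) s1 n2x n2y hgap hn1 hn2) as hpar.
set (N := (c1 + e1) ^ 2 + s1 ^ 2).
assert (hN : 0 < N).
{ assert (-1 <= c1) by nra.
  assert (0 <= e1 * (1 + c1)) by (apply Rmult_le_pos; lra).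
  unfold N; nra. }
set (l1 := sqrt N).
assert (hl1 : 0 < l1) by (apply sqrt_lt_R0, hN).
assert (hl1sq : l1 ^ 2 = N) by (apply pow2_sqrt; lra).
set (c := (c1 + e1) / l1); set (s := s1 / l1).
assert (hcs : c ^ 2 + s ^ 2 = 1).
{ unfold c, s; replace (((c1 + e1) / l1) ^ 2 + (s1 / l1) ^ 2) with (N / l1 ^ 2)
    by (unfold N; field; lra).
  rewrite hl1sq; field; lra. }
destruct (parallel_scale c s n2x n2y) as [l2 [hx hy]].
{ lra. }
{ unfold c, s; replace (n2x * (s1 / l1) - n2y * ((c1 + e1) / l1))
    with (- ((c1 + e1) * n2y - s1 * n2x) / l1) by (field; lra).
  rewrite hpar; field; lra. }
exists c, s, l1, l2; repeat split.
- exact hcs.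
- unfold c; field; lra.
- unfold s; field; lra.
- unfold rotc; transitivity ((c2 + e2) * (cw ^ 2 + sw ^ 2) - e2); [rewrite hw; ring|].
  transitivity (n2x * cw + n2y * sw - e2); [unfold n2x, n2y | rewrite hx, hy]; ring.
- unfold rots; transitivity (s2 * (cw ^ 2 + sw ^ 2)); [rewrite hw; ring|].
  transitivity (n2y * cw - n2x * sw); [unfold n2x, n2y | rewrite hx, hy]; ring.
- unfold c, s; replace (gx * (s1 / l1) - gy * ((c1 + e1) / l1))
    with ((gx * s1 - gy * (c1 + e1)) / l1) by (field; lra).
  rewrite hn1; field; lra.
Qed.

Lemma normal_equation c1 s1 c2 s2 c s l1 l2 :
  c1 ^ 2 + s1 ^ 2 = 1 -> c2 ^ 2 + s2 ^ 2 = 1 ->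
  on_normal e1 e2 cw sw c1 s1 c2 s2 c s l1 l2 ->
  gap_x c1 s1 c2 s2 * s - gap_y c1 s1 c2 s2 * c = 0 ->
  normal_eq (p1 * e1 * (1 - e2 ^ 2)) (p2 * e2 * (1 - e1 ^ 2)) e1 e2 cw sw c s
    (l1 - e1 * c) (l2 - e2 * rotc cw sw c s).
Proof.
intros hu1 hu2 (hcs & hc1 & hs1 & hc2 & hs2) hgap.
assert (hq1 : 0 < 1 + e1 * c1) by (apply focal_denominator_pos; nra).
assert (hq2 : 0 < 1 + e2 * c2) by (apply focal_denominator_pos; nra).
assert (hf1 := focal_identity e1 c s l1 hcs ltac:(rewrite <- hc1, <- hs1; exact hu1)).
assert (hf2 := focal_identity e2 _ _ l2 (eq_trans (rot_norm cw sw c s hw) hcs)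
  ltac:(rewrite <- hc2, <- hs2; exact hu2)).
rewrite <- hc1 in hf1; rewrite <- hc2 in hf2.
unfold gap_x, gap_y in hgap.
set (r1 := p1 / (1 + e1 * c1)) in hgap; set (r2 := p2 / (1 + e2 * c2)) in hgap.
assert (hr : e2 * r2 * rots cw sw c s - e1 * r1 * s = 0).
{ rewrite <- hgap, hc1, hs1, hc2, hs2; unfold rotc, rots; ring. }
assert (hkey : p1 * e1 * s * (1 + e2 * c2) - p2 * e2 * rots cw sw c s * (1 + e1 * c1) = 0).
{ unfold r1, r2 in hr; apply (Rmult_eq_compat_r ((1 + e1 * c1) * (1 + e2 * c2))) in hr.
  field_simplify in hr; lra. }
unfold normal_eq, Lf, Pf, Qf.
set (d1 := l1 - e1 * c) in *; set (d2 := l2 - e2 * rotc cw sw c s) in *.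
apply Rminus_diag_uniq.
transitivity ((p1 * e1 * s * (1 + e2 * c2) - p2 * e2 * rots cw sw c s * (1 + e1 * c1))
    * (d1 - e1 * c) * (d2 - e2 * rotc cw sw c s)
  + p1 * e1 * s * (d1 - e1 * c) * ((1 - e2 ^ 2) * d2 - (1 + e2 * c2) * (d2 - e2 * rotc cw sw c s))
  - p2 * e2 * rots cw sw c s * (d2 - e2 * rotc cw sw c s)
    * ((1 - e1 ^ 2) * d1 - (1 + e1 * c1) * (d1 - e1 * c))); [ring|].
rewrite hkey, hf1, hf2; ring.
Qed.

Lemma collision_line c1 s1 c2 s2 :
  c1 ^ 2 + s1 ^ 2 = 1 -> c2 ^ 2 + s2 ^ 2 = 1 ->
  gap_x c1 s1 c2 s2 = 0 -> gap_y c1 s1 c2 s2 = 0 ->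
  c2 = c1 * cw + s1 * sw /\ s2 = s1 * cw - c1 * sw /\
  (p1 * e2 * cw - p2 * e1) * c1 + p1 * e2 * sw * s1 = p2 - p1.
Proof.
intros hu1 hu2 hx hy; unfold gap_x, gap_y in hx, hy.
assert (hq1 : 0 < 1 + e1 * c1) by (apply focal_denominator_pos; nra).
assert (hq2 : 0 < 1 + e2 * c2) by (apply focal_denominator_pos; nra).
set (r1 := p1 / (1 + e1 * c1)) in *; set (r2 := p2 / (1 + e2 * c2)) in *.
set (C := c2 * cw - s2 * sw) in *; set (S := c2 * sw + s2 * cw) in *.
assert (hr1 : 0 < r1) by (apply Rdiv_lt_0_compat; lra).
assert (hr2 : 0 < r2) by (apply Rdiv_lt_0_compat; lra).
assert (hCS : C ^ 2 + S ^ 2 = 1).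
{ unfold C, S; transitivity ((c2 ^ 2 + s2 ^ 2) * (cw ^ 2 + sw ^ 2)); [|rewrite hu2, hw]; ring. }
assert (hrr : r1 = r2).
{ assert (r1 ^ 2 = r2 ^ 2).
  { transitivity ((r1 * c1) ^ 2 + (r1 * s1) ^ 2); [rewrite <- (Rmult_1_r (r1 ^ 2)), <- hu1; ring|].
    replace (r1 * c1) with (r2 * C) by lra; replace (r1 * s1) with (r2 * S) by lra.
    rewrite <- (Rmult_1_r (r2 ^ 2)), <- hCS; ring. }
  assert (hprod : (r1 - r2) * (r1 + r2) = 0) by (transitivity (r1 ^ 2 - r2 ^ 2); [ring | lra]).
  apply Rmult_integral in hprod as [? | ?]; lra. }
assert (hC : c1 = C) by (apply (Rmult_eq_reg_l r1); [rewrite hrr at 2 | ]; lra).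
assert (hS : s1 = S) by (apply (Rmult_eq_reg_l r1); [rewrite hrr at 2 | ]; lra).
assert (hc2 : c2 = c1 * cw + s1 * sw).
{ rewrite hC, hS; transitivity (c2 * (cw ^ 2 + sw ^ 2)); [rewrite hw|unfold C, S]; ring. }
assert (hs2 : s2 = s1 * cw - c1 * sw).
{ rewrite hC, hS; transitivity (s2 * (cw ^ 2 + sw ^ 2)); [rewrite hw|unfold C, S]; ring. }
repeat split; [exact hc2 | exact hs2|].
unfold r1, r2 in hrr; apply (Rmult_eq_compat_r ((1 + e1 * c1) * (1 + e2 * c2))) in hrr.
field_simplify in hrr; [|lra|lra]. rewrite hc2 in hrr; lra.
Qed.

End CommonNormal.

Lemma sq_eq_cases a b : a ^ 2 = b ^ 2 -> a = b \/ a = - b.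
Proof. rewrite <- !Rsqr_pow2; apply Rsqr_eq. Qed.

Section SignAnalysis.

Variables A B e1 e2 cw sw : R.
Hypotheses (hA : A <> 0) (hB : B <> 0) (he1 : 0 < e1 < 1) (he2 : 0 < e2 < 1)
  (hsw : sw <> 0) (hw : cw ^ 2 + sw ^ 2 = 1).

Let L := Lf A B cw sw.
Let P := Pf A e1.
Let Q := Qf B e2 cw sw.
Let D1 := D1f e1.
Let D2 := D2f e2 cw sw.

(* Two sign choices of [(d1, d2)] solve [normal_eq] for the same normal only if
   [P = 0], [Q = 0] or [L = 0], which forces the normal to be parallel to [(0, 1)],
   to [(- sw, cw)] or to [(A - B cw, - B sw)]; then [LQ_form], [LP_form] or [PQ_form]
   respectively vanishes at that point. *)
Definition LQ_form c s := L c s ^ 2 * D2 c s - Q c s ^ 2.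
Definition LP_form c s := L c s ^ 2 * D1 c s - P c s ^ 2.
Definition PQ_form c s := P c s ^ 2 * D2 c s - Q c s ^ 2 * D1 c s.

Lemma D1_pos c s : c ^ 2 + s ^ 2 = 1 -> 0 < D1 c s.
Proof. unfold D1, D1f; intros hcs; rewrite hcs; nra. Qed.

Lemma D2_pos c s : c ^ 2 + s ^ 2 = 1 -> 0 < D2 c s.
Proof.
unfold D2, D2f; intros hcs; pose proof (rot_norm cw sw c s hw) as hr.
rewrite hcs in *; nra.
Qed.

Lemma is_form_LQ : is_form 4 LQ_form.
Proof.
pose proof (is_form_rotc cw sw); pose proof (is_form_rots cw sw).
unfold LQ_form, L, Q, D2, Lf, Qf, D2f; solve_form.
Qed.

Lemma is_form_LP : is_form 4 LP_form.
Proof.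
pose proof (is_form_rotc cw sw); pose proof (is_form_rots cw sw).
unfold LP_form, L, P, D1, Lf, Pf, D1f; solve_form.
Qed.

Lemma is_form_PQ : is_form 6 PQ_form.
Proof.
pose proof (is_form_rotc cw sw); pose proof (is_form_rots cw sw).
unfold PQ_form, P, Q, D1, D2, Pf, Qf, D1f, D2f; solve_form.
Qed.

Let NE := normal_eq A B e1 e2 cw sw.

Lemma normal_eq_flip1 c s d1 d2 : d1 <> 0 -> d2 <> 0 ->
  NE c s d1 d2 -> NE c s (- d1) d2 -> P c s = 0 /\ L c s * d2 = - Q c s.
Proof.
unfold NE, normal_eq; fold L P Q; intros hd1 hd2 h h'.
assert (hP : P c s * d2 = 0) by lra.
apply Rmult_integral in hP as [hP | hP]; [split; [exact hP|] | contradiction].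
assert (h0 : (L c s * d2 + Q c s) * d1 = 0) by (rewrite hP in h; lra).
apply Rmult_integral in h0 as [h0 | h0]; [lra | contradiction].
Qed.

Lemma normal_eq_flip2 c s d1 d2 : d1 <> 0 -> d2 <> 0 ->
  NE c s d1 d2 -> NE c s d1 (- d2) -> Q c s = 0 /\ L c s * d1 = P c s.
Proof.
unfold NE, normal_eq; fold L P Q; intros hd1 hd2 h h'.
assert (hQ : Q c s * d1 = 0) by lra.
apply Rmult_integral in hQ as [hQ | hQ]; [split; [exact hQ|] | contradiction].
assert (h0 : (L c s * d1 - P c s) * d2 = 0) by (rewrite hQ in h; lra).
apply Rmult_integral in h0 as [h0 | h0]; [lra | contradiction].
Qed.

Lemma normal_eq_flip12 c s d1 d2 : d1 <> 0 -> d2 <> 0 ->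
  NE c s d1 d2 -> NE c s (- d1) (- d2) -> L c s = 0 /\ P c s * d2 = Q c s * d1.
Proof.
unfold NE, normal_eq; fold L P Q; intros hd1 hd2 h h'.
assert (hPQ : P c s * d2 = Q c s * d1) by lra; split; [|exact hPQ].
assert (hL : L c s * (d1 * d2) = 0) by lra.
apply Rmult_integral in hL as [hL | hL]; [exact hL | now apply Rmult_integral in hL as [|]].
Qed.

Lemma flip1_degenerate c s d2 : s <> 0 ->
  d2 ^ 2 = D2 c s -> P c s = 0 -> L c s * d2 = - Q c s -> LQ_form 0 1 = 0.
Proof.
intros hs hd2 hP hLQ.
assert (hc : c = s * 0).
{ unfold P, Pf in hP; apply Rmult_integral in hP as [hP | ->]; [|ring].
  exfalso; revert hP; repeat apply Rmult_integral_contrapositive_currified; lra. }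
apply (is_form_eq0_scale 4 LQ_form s); [exact is_form_LQ | exact hs|].
rewrite <- hc, Rmult_1_r; unfold LQ_form; rewrite <- hd2.
transitivity ((L c s * d2) ^ 2 - Q c s ^ 2); [ring | rewrite hLQ; ring].
Qed.

Lemma flip2_degenerate c s d1 : c ^ 2 + s ^ 2 = 1 -> s <> 0 ->
  d1 ^ 2 = D1 c s -> Q c s = 0 -> L c s * d1 = P c s -> LP_form (- sw) cw = 0.
Proof.
intros hcs hs hd1 hQ hLP; unfold Q, Qf in hQ.
apply Rmult_integral in hQ as [hQ | hrc].
- exfalso; apply Rmult_integral in hQ as [hQ | hrs];
    [revert hQ; apply Rmult_integral_contrapositive_currified; lra|].
  unfold L, Lf, P, Pf in hLP; rewrite hrs in hLP.
  assert (hd : d1 = e1 * c).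
  { apply (Rmult_eq_reg_l (A * s)); [lra | now apply Rmult_integral_contrapositive_currified]. }
  rewrite hd in hd1; unfold D1, D1f in hd1.
  assert (e1 ^ 2 * (c ^ 2 + s ^ 2) = c ^ 2 + s ^ 2) by lra.
  rewrite hcs in *; nra.
- destruct (parallel_scale (- sw) cw c s) as [k [hc hs']];
    [nra | unfold rotc in hrc; lra |].
  assert (hk : k <> 0) by (intros ->; rewrite hc, hs' in hcs; lra).
  apply (is_form_eq0_scale 4 LP_form k); [exact is_form_LP | exact hk|].
  rewrite <- hc, <- hs'; unfold LP_form; rewrite <- hd1.
  transitivity ((L c s * d1) ^ 2 - P c s ^ 2); [ring | rewrite hLP; ring].
Qed.

Lemma flip12_degenerate c s d1 d2 : c ^ 2 + s ^ 2 = 1 ->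
  d1 ^ 2 = D1 c s -> d2 ^ 2 = D2 c s -> L c s = 0 -> P c s * d2 = Q c s * d1 ->
  PQ_form (A - B * cw) (- (B * sw)) = 0.
Proof.
intros hcs hd1 hd2 hL hPQ.
destruct (parallel_scale (A - B * cw) (- (B * sw)) c s) as [k [hc hs]].
{ assert (0 < (B * sw) ^ 2) by (apply pow2_gt_0, Rmult_integral_contrapositive_currified; assumption).
  pose proof (pow2_ge_0 (A - B * cw)); intro; lra. }
{ unfold L, Lf, rots in hL; lra. }
assert (hk : k <> 0) by (intros ->; rewrite hc, hs in hcs; lra).
apply (is_form_eq0_scale 6 PQ_form k); [exact is_form_PQ | exact hk|].
rewrite <- hc, <- hs; unfold PQ_form; rewrite <- hd1, <- hd2.
transitivity ((P c s * d2) ^ 2 - (Q c s * d1) ^ 2); [ring | rewrite hPQ; ring].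
Qed.


Lemma normal_eq_unique c s d1 d2 d1' d2' : c ^ 2 + s ^ 2 = 1 -> s <> 0 ->
  LQ_form 0 1 <> 0 -> LP_form (- sw) cw <> 0 -> PQ_form (A - B * cw) (- (B * sw)) <> 0 ->
  d1 ^ 2 = D1 c s -> d2 ^ 2 = D2 c s -> d1' ^ 2 = D1 c s -> d2' ^ 2 = D2 c s ->
  NE c s d1 d2 -> NE c s d1' d2' -> d1' = d1 /\ d2' = d2.
Proof.
intros hcs hs hK1 hK2 hK3 hd1 hd2 hd1' hd2' h h'.
pose proof (D1_pos c s hcs); pose proof (D2_pos c s hcs).
assert (hd1n : d1 <> 0) by (intros ->; lra).
assert (hd2n : d2 <> 0) by (intros ->; lra).
destruct (sq_eq_cases d1' d1 ltac:(congruence)) as [-> | ->];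
  destruct (sq_eq_cases d2' d2 ltac:(congruence)) as [-> | ->]; [easy | exfalso..].
- destruct (normal_eq_flip2 c s d1 d2 hd1n hd2n h h') as [hQ hLP].
  exact (hK2 (flip2_degenerate c s d1 hcs hs hd1 hQ hLP)).
- destruct (normal_eq_flip1 c s d1 d2 hd1n hd2n h h') as [hP hLQ].
  exact (hK1 (flip1_degenerate c s d2 hs hd2 hP hLQ)).
- destruct (normal_eq_flip12 c s d1 d2 hd1n hd2n h h') as [hL hPQ].
  exact (hK3 (flip12_degenerate c s d1 d2 hcs hd1 hd2 hL hPQ)).
Qed.

End SignAnalysis.

Lemma angle_eq_of_cos_sin f g : 0 <= f < 2 * PI -> 0 <= g < 2 * PI ->
  cos f = cos g -> sin f = sin g -> f = g.
Proof.
assert (key : forall f g, 0 <= f < 2 * PI -> 0 <= g < 2 * PI -> f <= g ->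
  cos f = cos g -> sin f = sin g -> f = g).
{ intros x y hx hy hxy hc hs.
  assert (hcd : cos (y - x) = 1)
    by (rewrite cos_minus, <- hc, <- hs, <- (cos2_sin2 x); ring).
  replace (y - x) with (2 * ((y - x) / 2)) in hcd by field.
  rewrite cos_2a_sin in hcd.
  destruct (Req_dec x y) as [|hne]; [assumption | exfalso].
  assert (0 < sin ((y - x) / 2)) by (apply sin_gt_0; lra).
  nra. }
intros hf hg hc hs; destruct (Rle_dec f g).
- apply key; assumption.
- symmetry; apply key; auto; lra.
Qed.

Lemma torus_eq f f' : in_torus f -> in_torus f' ->
  cos (fst f) = cos (fst f') -> sin (fst f) = sin (fst f') ->
  cos (snd f) = cos (snd f') -> sin (snd f) = sin (snd f') -> f = f'.
Proof.
destruct f as [f1 f2], f' as [f1' f2']; intros [h1 h2] [h1' h2']; simpl in *.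
intros; f_equal; apply angle_eq_of_cos_sin; assumption.
Qed.

(** * Critical points *)

Section Calculus.

Variables p1 e1 p2 e2 om2 : R.
Hypothesis hadm : admissible p1 e1 p2 e2.

Lemma X1_sub_X2 f1 f2 :
  fst (X1 p1 e1 f1) - fst (X2 p2 e2 om2 f2)
    = gap_x p1 e1 p2 e2 (cos om2) (sin om2) (cos f1) (sin f1) (cos f2) (sin f2) /\
  snd (X1 p1 e1 f1) - snd (X2 p2 e2 om2 f2)
    = gap_y p1 e1 p2 e2 (cos om2) (sin om2) (cos f1) (sin f1) (cos f2) (sin f2).
Proof. unfold X1, X2, gap_x, gap_y; simpl; rewrite cos_plus, sin_plus; split; ring. Qed.

Lemma dist2_gap f1 f2 : dist2 p1 e1 p2 e2 om2 f1 f2 =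
  gap_x p1 e1 p2 e2 (cos om2) (sin om2) (cos f1) (sin f1) (cos f2) (sin f2) ^ 2
  + gap_y p1 e1 p2 e2 (cos om2) (sin om2) (cos f1) (sin f1) (cos f2) (sin f2) ^ 2.
Proof. unfold dist2; destruct (X1_sub_X2 f1 f2) as [-> ->]; reflexivity. Qed.

Lemma is_derive_dist2_l f1 f2 :
  is_derive (fun x => dist2 p1 e1 p2 e2 om2 x f2) f1
    (2 * p1 / (1 + e1 * cos f1) ^ 2 *
     ((snd (X1 p1 e1 f1) - snd (X2 p2 e2 om2 f2)) * (cos f1 + e1)
      - (fst (X1 p1 e1 f1) - fst (X2 p2 e2 om2 f2)) * sin f1)).
Proof.
destruct hadm as (_ & _ & he1 & he2).
pose proof (focal_denominator_pos e1 (cos f1) he1 ltac:(pose proof (cos2_sin2 f1); nra)).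
pose proof (focal_denominator_pos e2 (cos f2) he2 ltac:(pose proof (cos2_sin2 f2); nra)).
unfold dist2, X1, X2; simpl.
auto_derive; [repeat split; lra|].
replace (cos f1 + e1) with (cos f1 + e1 * (cos f1 ^ 2 + sin f1 ^ 2))
  by (rewrite cos2_sin2; ring).
field; lra.
Qed.

Lemma is_derive_dist2_r f1 f2 :
  is_derive (fun y => dist2 p1 e1 p2 e2 om2 f1 y) f2
    (- 2 * p2 / (1 + e2 * cos f2) ^ 2 *
     ((snd (X1 p1 e1 f1) - snd (X2 p2 e2 om2 f2)) * (cos (f2 + om2) + e2 * cos om2)
      - (fst (X1 p1 e1 f1) - fst (X2 p2 e2 om2 f2)) * (sin (f2 + om2) + e2 * sin om2))).
Proof.
destruct hadm as (_ & _ & he1 & he2).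
pose proof (focal_denominator_pos e1 (cos f1) he1 ltac:(pose proof (cos2_sin2 f1); nra)).
pose proof (focal_denominator_pos e2 (cos f2) he2 ltac:(pose proof (cos2_sin2 f2); nra)).
unfold dist2, X1, X2; simpl.
auto_derive; [repeat split; lra|].
replace (e2 * cos om2) with (e2 * cos om2 * (cos f2 ^ 2 + sin f2 ^ 2))
  by (rewrite cos2_sin2; ring).
replace (e2 * sin om2) with (e2 * sin om2 * (cos f2 ^ 2 + sin f2 ^ 2))
  by (rewrite cos2_sin2; ring).
rewrite !cos_plus, !sin_plus; field; lra.
Qed.

Lemma crit_pt_normals f1 f2 : crit_pt p1 e1 p2 e2 om2 f1 f2 ->
  let gx := gap_x p1 e1 p2 e2 (cos om2) (sin om2) (cos f1) (sin f1) (cos f2) (sin f2) in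
  let gy := gap_y p1 e1 p2 e2 (cos om2) (sin om2) (cos f1) (sin f1) (cos f2) (sin f2) in
  gx * sin f1 - gy * (cos f1 + e1) = 0 /\
  gx * (cos f2 * sin om2 + sin f2 * cos om2 + e2 * sin om2)
    - gy * (cos f2 * cos om2 - sin f2 * sin om2 + e2 * cos om2) = 0.
Proof.
intros [h1 h2] gx gy.
pose proof hadm as (hp1 & hp2 & he1 & he2).
pose proof (focal_denominator_pos e1 (cos f1) he1 ltac:(pose proof (cos2_sin2 f1); nra)).
pose proof (focal_denominator_pos e2 (cos f2) he2 ltac:(pose proof (cos2_sin2 f2); nra)).
apply is_derive_unique in h1, h2.
rewrite (is_derive_unique _ _ _ (is_derive_dist2_l f1 f2)) in h1.
rewrite (is_derive_unique _ _ _ (is_derive_dist2_r f1 f2)) in h2.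
destruct (X1_sub_X2 f1 f2) as [hx hy]; rewrite hx, hy, cos_plus, sin_plus in *; fold gx gy in h1, h2.
assert (0 < 2 * p1 / (1 + e1 * cos f1) ^ 2) by (apply Rdiv_lt_0_compat; [|apply pow_lt]; lra).
assert (0 < 2 * p2 / (1 + e2 * cos f2) ^ 2) by (apply Rdiv_lt_0_compat; [|apply pow_lt]; lra).
split.
- apply Rmult_integral in h1 as [h1 | h1]; lra.
- apply Rmult_integral in h2 as [h2 | h2]; lra.
Qed.

End Calculus.

(** * Counting *)

Definition genericity (p1 p2 e1 e2 cw sw : R) : R :=
  let A := p1 * e1 * (1 - e2 ^ 2) in
  let B := p2 * e2 * (1 - e1 ^ 2) in
  e1 * e2 * sw * LQ_form A B e2 cw sw 0 1 * LP_form A B e1 cw sw (- sw) cw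
  * PQ_form A B e1 e2 cw sw (A - B * cw) (- (B * sw)).

Definition normal_slope (e1 : R) (f : R * R) : R := (cos (fst f) + e1) / sin (fst f).

Lemma unit_eq_of_ratio c s c' s' : c ^ 2 + s ^ 2 = 1 -> c' ^ 2 + s' ^ 2 = 1 ->
  0 < s -> 0 < s' -> c / s = c' / s' -> c = c' /\ s = s'.
Proof.
intros hcs hcs' hs hs' hx.
set (x := c / s) in hx.
assert (hc : c = x * s) by (unfold x; field; lra).
assert (hc' : c' = x * s') by (rewrite hx; field; lra).
assert (hss : s ^ 2 = s' ^ 2).
{ apply (Rmult_eq_reg_r (x ^ 2 + 1)); [|pose proof (pow2_ge_0 x); lra].
  transitivity 1; [|symmetry].
  - transitivity ((x * s) ^ 2 + s ^ 2); [ring | rewrite <- hc; exact hcs].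
  - transitivity ((x * s') ^ 2 + s' ^ 2); [ring | rewrite <- hc'; exact hcs']. }
destruct (sq_eq_cases s s' hss) as [-> | ->]; [|lra].
split; [rewrite hc, hc'|]; reflexivity.
Qed.

Section Counting.

Variables p1 e1 p2 e2 om2 : R.
Hypotheses (hadm : admissible p1 e1 p2 e2)
  (hgen : genericity p1 p2 e1 e2 (cos om2) (sin om2) <> 0).

Let cw := cos om2.
Let sw := sin om2.
Let A := p1 * e1 * (1 - e2 ^ 2).
Let B := p2 * e2 * (1 - e1 ^ 2).

Lemma genericity_factors :
  0 < e1 < 1 /\ 0 < e2 < 1 /\ sw <> 0 /\ A <> 0 /\ B <> 0 /\
  LQ_form A B e2 cw sw 0 1 <> 0 /\ LP_form A B e1 cw sw (- sw) cw <> 0 /\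
  PQ_form A B e1 e2 cw sw (A - B * cw) (- (B * sw)) <> 0.
Proof.
pose proof hadm as (hp1 & hp2 & he1 & he2).
pose proof hgen as h; unfold genericity in h; cbv zeta in h.
apply Rmult_neq_0_reg in h as [h hK3]; apply Rmult_neq_0_reg in h as [h hK2].
apply Rmult_neq_0_reg in h as [h hK1]; apply Rmult_neq_0_reg in h as [h hsw].
apply Rmult_neq_0_reg in h as [he1n he2n].
refine (conj _ (conj _ (conj hsw (conj _ (conj _ (conj hK1 (conj hK2 hK3))))))); [lra | lra | |];
  repeat apply Rmult_integral_contrapositive_currified; nra.
Qed.

Lemma crit_form_lead_coef_neq0 : crit_form A B e1 e2 cw sw 1 0 <> 0.
Proof.
destruct genericity_factors as (_ & he2 & hsw & _ & hB & _).
assert (hw : cw ^ 2 + sw ^ 2 = 1) by apply cos2_sin2.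
rewrite crit_form_lead_coef, hw.
apply Rmult_integral_contrapositive_currified;
  [apply Rmult_integral_contrapositive_currified|]; apply pow_nonzero;
  [exact hB | exact hsw | apply Rgt_not_eq; nra].
Qed.

Lemma crit_form_root_s_neq0 c s :
  c ^ 2 + s ^ 2 = 1 -> crit_form A B e1 e2 cw sw c s = 0 -> s <> 0.
Proof.
intros hcs hF ->; destruct (is_form_crit_form A B e1 e2 cw sw) as [hom _].
pose proof (hom c 1 0) as h; rewrite Rmult_1_r, Rmult_0_r, hF in h.
symmetry in h; apply Rmult_integral in h as [h | h].
- apply (pow_nonzero c 10); [intros ->; lra | exact h].
- exact (crit_form_lead_coef_neq0 h).
Qed.

Lemma noncollision_normal f1 f2 :
  crit_pt p1 e1 p2 e2 om2 f1 f2 -> dist2 p1 e1 p2 e2 om2 f1 f2 <> 0 ->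
  exists c s l1 l2, on_normal e1 e2 cw sw (cos f1) (sin f1) (cos f2) (sin f2) c s l1 l2 /\
    0 < s /\ normal_eq A B e1 e2 cw sw c s (l1 - e1 * c) (l2 - e2 * rotc cw sw c s) /\
    crit_form A B e1 e2 cw sw c s = 0.
Proof.
intros hcrit hd.
pose proof hadm as (_ & _ & he1 & he2).
assert (hw : cw ^ 2 + sw ^ 2 = 1) by apply cos2_sin2.
pose proof (cos2_sin2 f1) as hu1; pose proof (cos2_sin2 f2) as hu2.
destruct (crit_pt_normals p1 e1 p2 e2 om2 hadm f1 f2 hcrit) as [hn1 hn2].
rewrite dist2_gap in hd.
assert (hgap : gap_x p1 e1 p2 e2 cw sw (cos f1) (sin f1) (cos f2) (sin f2) <> 0 \/
               gap_y p1 e1 p2 e2 cw sw (cos f1) (sin f1) (cos f2) (sin f2) <> 0).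
{ destruct (Req_dec (gap_x p1 e1 p2 e2 cw sw (cos f1) (sin f1) (cos f2) (sin f2)) 0) as [hx|hx];
    [right; intros hy; apply hd; fold cw sw; rewrite hx, hy; ring | left; exact hx]. }
destruct (common_normal p1 e1 p2 e2 cw sw he1 hw _ _ _ _ hu1 hu2 hgap hn1 hn2)
  as (c & s & l1 & l2 & hon & hgs).
pose proof (normal_equation p1 e1 p2 e2 cw sw he1 he2 hw _ _ _ _ _ _ _ _ hu1 hu2 hon hgs) as hNE.
destruct (on_normal_offsets _ _ _ _ _ _ _ _ _ _ _ _ hw hu1 hu2 hon) as [hd1 hd2].
pose proof (eliminant_eq0 _ _ _ _ _ _ _ _ _ _ hd1 hd2 hNE) as hF.
pose proof hon as (hcs & _); rewrite eliminant_factor, hcs, Rmult_1_l in hF.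
fold A B cw sw in hF.
destruct (is_form_crit_form A B e1 e2 cw sw) as [hom _].
pose proof (crit_form_root_s_neq0 c s hcs hF) as hs.
destruct (Rlt_or_le 0 s) as [hpos | hneg].
- exists c, s, l1, l2; auto.
- exists (- c), (- s), (- l1), (- l2); split; [|split; [|split]].
  + apply on_normal_opp, hon.
  + lra.
  + replace (- l1 - e1 * - c) with (- (l1 - e1 * c)) by ring.
    replace (- l2 - e2 * rotc cw sw (- c) (- s)) with (- (l2 - e2 * rotc cw sw c s))
      by (unfold rotc; ring).
    apply normal_eq_opp, hNE.
  + replace (- c) with (-1 * c) by ring; replace (- s) with (-1 * s) by ring.
    rewrite hom, hF; ring.
Qed.

Lemma normal_slope_eq f c2 s2 c s l1 l2 :
  on_normal e1 e2 cw sw (cos (fst f)) (sin (fst f)) c2 s2 c s l1 l2 -> 0 < s ->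
  normal_slope e1 f = c / s.
Proof.
intros (_ & hc1 & hs1 & _) hs; destruct genericity_factors as (he1 & _).
assert (hl1 : l1 <> 0).
{ intros ->; pose proof (cos2_sin2 (fst f)) as hu; rewrite hc1, hs1 in hu; nra. }
assert (s <> 0) by lra.
unfold normal_slope; rewrite hc1, hs1; field; auto.
Qed.

Lemma noncollision_slope_root f :
  crit_pt p1 e1 p2 e2 om2 (fst f) (snd f) -> dist2 p1 e1 p2 e2 om2 (fst f) (snd f) <> 0 ->
  crit_form A B e1 e2 cw sw (normal_slope e1 f) 1 = 0.
Proof.
intros hcrit hd.
destruct (noncollision_normal _ _ hcrit hd) as (c & s & l1 & l2 & hon & hs & _ & hF).
rewrite (normal_slope_eq _ _ _ _ _ _ _ hon hs).
apply (is_form_eq0_scale 10 _ s); [apply is_form_crit_form | lra |].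
replace (s * (c / s)) with c by (field; lra); rewrite Rmult_1_r; exact hF.
Qed.

Lemma noncollision_slope_inj f f' : in_torus f -> in_torus f' ->
  crit_pt p1 e1 p2 e2 om2 (fst f) (snd f) -> dist2 p1 e1 p2 e2 om2 (fst f) (snd f) <> 0 ->
  crit_pt p1 e1 p2 e2 om2 (fst f') (snd f') -> dist2 p1 e1 p2 e2 om2 (fst f') (snd f') <> 0 ->
  normal_slope e1 f = normal_slope e1 f' -> f = f'.
Proof.
intros ht ht' hcrit hd hcrit' hd' hslope.
destruct genericity_factors as (he1 & he2 & hsw & hA & hB & hK1 & hK2 & hK3).
assert (hw : cw ^ 2 + sw ^ 2 = 1) by apply cos2_sin2.
destruct (noncollision_normal _ _ hcrit hd) as (c & s & l1 & l2 & hon & hs & hNE & _).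
destruct (noncollision_normal _ _ hcrit' hd') as (c' & s' & l1' & l2' & hon' & hs' & hNE' & _).
rewrite (normal_slope_eq _ _ _ _ _ _ _ hon hs), (normal_slope_eq _ _ _ _ _ _ _ hon' hs') in hslope.
destruct (unit_eq_of_ratio c s c' s' (proj1 hon) (proj1 hon') hs hs' hslope) as [<- <-].
destruct (on_normal_offsets _ _ _ _ _ _ _ _ _ _ _ _ hw (cos2_sin2 _) (cos2_sin2 _) hon)
  as [hd1 hd2].
destruct (on_normal_offsets _ _ _ _ _ _ _ _ _ _ _ _ hw (cos2_sin2 _) (cos2_sin2 _) hon')
  as [hd1' hd2'].
destruct (normal_eq_unique A B e1 e2 cw sw hA hB he1 he2 hsw hw c s _ _ _ _ (proj1 hon)
  (Rgt_not_eq _ _ hs) hK1 hK2 hK3 hd1 hd2 hd1' hd2' hNE hNE') as [h1 h2].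
assert (l1' = l1) by lra; assert (l2' = l2) by lra; subst l1' l2'.
destruct hon as (_ & hc1 & hs1 & hc2 & hs2), hon' as (_ & hc1' & hs1' & hc2' & hs2').
apply torus_eq; congruence.
Qed.

Lemma noncollision_count l : NoDup l ->
  (forall f, In f l -> in_torus f /\ crit_pt p1 e1 p2 e2 om2 (fst f) (snd f) /\
     dist2 p1 e1 p2 e2 om2 (fst f) (snd f) <> 0) ->
  (length l <= 10)%nat.
Proof.
intros hnd hl.
apply (count_by_form 10 _ (normal_slope e1) l (is_form_crit_form A B e1 e2 cw sw)
  crit_form_lead_coef_neq0 hnd).
- intros f hf; destruct (hl f hf) as (_ & hcrit & hd).
  exact (noncollision_slope_root f hcrit hd).
- intros f f' hf hf'; destruct (hl f hf) as (ht & hcrit & hd), (hl f' hf') as (ht' & hcrit' & hd').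
  exact (noncollision_slope_inj f f' ht ht' hcrit hd hcrit' hd').
Qed.

Lemma collision_line_angles f1 f2 : dist2 p1 e1 p2 e2 om2 f1 f2 = 0 ->
  cos f2 = cos f1 * cw + sin f1 * sw /\ sin f2 = sin f1 * cw - cos f1 * sw /\
  (p1 * e2 * cw - p2 * e1) * cos f1 + p1 * e2 * sw * sin f1 = p2 - p1.
Proof.
intros hd; pose proof hadm as (hp1 & hp2 & he1 & he2).
rewrite dist2_gap, <- !Rsqr_pow2 in hd; apply Rplus_sqr_eq_0 in hd as [hx hy].
exact (collision_line p1 e1 p2 e2 cw sw hp1 hp2 he1 he2 (cos2_sin2 om2) _ _ _ _
  (cos2_sin2 f1) (cos2_sin2 f2) hx hy).
Qed.

Lemma collision_count l : NoDup l ->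
  (forall f, In f l -> in_torus f /\ dist2 p1 e1 p2 e2 om2 (fst f) (snd f) = 0) ->
  (length l <= 2)%nat.
Proof.
intros hnd hl; pose proof hadm as (hp1 & _).
destruct genericity_factors as (_ & he2 & hsw & _).
set (a := p1 * e2 * cw - p2 * e1); set (b := p1 * e2 * sw); set (k := p2 - p1).
assert (hb : b <> 0) by (unfold b; repeat apply Rmult_integral_contrapositive_currified; lra).
apply (count_by_form 2 (fun x y => (a ^ 2 + b ^ 2) * x ^ 2 - 2 * a * k * x * y + (k ^ 2 - b ^ 2) * y ^ 2)
  (fun f => cos (fst f))); [solve_form | | exact hnd | |].
- pose proof (pow2_ge_0 a); pose proof (pow2_gt_0 b hb); apply Rgt_not_eq; nra.
- intros f hf; destruct (hl f hf) as (_ & hd).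
  destruct (collision_line_angles _ _ hd) as (_ & _ & hline); fold a b k in hline.
  rewrite <- hline; transitivity (b ^ 2 * (cos (fst f) ^ 2 + sin (fst f) ^ 2 - 1)); [ring|].
  rewrite cos2_sin2; ring.
- intros f f' hf hf' hc; destruct (hl f hf) as (ht & hd), (hl f' hf') as (ht' & hd').
  destruct (collision_line_angles _ _ hd) as (hc2 & hs2 & hline).
  destruct (collision_line_angles _ _ hd') as (hc2' & hs2' & hline'); fold a b k in hline, hline'.
  assert (hs : sin (fst f) = sin (fst f')) by (apply (Rmult_eq_reg_l b); [rewrite hc in hline; lra | exact hb]).
  apply torus_eq; congruence.
Qed.

Lemma critical_count l : NoDup l ->
  (forall f, In f l -> in_torus f /\ crit_pt p1 e1 p2 e2 om2 (fst f) (snd f)) ->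
  (length l <= 12)%nat.
Proof.
intros hnd hl.
set (collision := fun f : R * R =>
  if Req_EM_T (dist2 p1 e1 p2 e2 om2 (fst f) (snd f)) 0 then true else false).
rewrite <- (filter_length collision l).
enough ((length (filter collision l) <= 2)%nat /\
        (length (filter (fun f => negb (collision f)) l) <= 10)%nat) by lia.
split; [apply collision_count | apply noncollision_count]; try apply NoDup_filter, hnd;
  intros f hf; apply filter_In in hf as [hf hc]; unfold collision in hc;
  destruct (hl f hf) as [ht hcrit];
  destruct Req_EM_T; try discriminate; auto.
Qed.

End Counting.

(** * The genericity polynomial *)

Definition poly6_const (r : R) : poly6 := (r, (0, 0, 0, 0, 0, 0)%nat) :: nil.
Definition poly6_mono (m : mono6) : poly6 := (1, m) :: nil.
Definition poly6_add (P Q : poly6) : poly6 := P ++ Q.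
Definition poly6_opp (P : poly6) : poly6 := map (fun cm => (- fst cm, snd cm)) P.

Definition mono6_mul (m n : mono6) : mono6 :=
  match m, n with (a1, a2, a3, a4, a5, a6), (b1, b2, b3, b4, b5, b6) =>
    (a1 + b1, a2 + b2, a3 + b3, a4 + b4, a5 + b5, a6 + b6)%nat end.

Definition poly6_mul (P Q : poly6) : poly6 :=
  flat_map (fun cm => map (fun dn => (fst cm * fst dn, mono6_mul (snd cm) (snd dn))) Q) P.

Fixpoint poly6_pow (P : poly6) (n : nat) : poly6 :=
  match n with O => poly6_const 1 | S n => poly6_mul P (poly6_pow P n) end.

Section Poly6Eval.

Variables x1 x2 x3 x4 x5 x6 : R.
Let ev (P : poly6) := eval_poly6 P x1 x2 x3 x4 x5 x6.

Lemma eval_poly6_cons c m P :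
  ev ((c, m) :: P) = c * eval_mono6 m x1 x2 x3 x4 x5 x6 + ev P.
Proof. reflexivity. Qed.

Lemma eval_poly6_const r : ev (poly6_const r) = r.
Proof. unfold ev, eval_poly6; simpl; ring. Qed.

Lemma eval_poly6_mono m : ev (poly6_mono m) = eval_mono6 m x1 x2 x3 x4 x5 x6.
Proof. unfold ev, eval_poly6; simpl; ring. Qed.

Lemma eval_poly6_add P Q : ev (poly6_add P Q) = ev P + ev Q.
Proof.
induction P as [|[c m] P IH]; [unfold ev, eval_poly6; simpl; ring|].
unfold poly6_add in *; rewrite <- app_comm_cons, !eval_poly6_cons, IH; ring.
Qed.

Lemma eval_poly6_opp P : ev (poly6_opp P) = - ev P.
Proof.
induction P as [|[c m] P IH]; [unfold ev, eval_poly6; simpl; ring|].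
unfold poly6_opp in *; simpl map; rewrite !eval_poly6_cons, IH; simpl; ring.
Qed.

Lemma eval_mono6_mul m n :
  eval_mono6 (mono6_mul m n) x1 x2 x3 x4 x5 x6
  = eval_mono6 m x1 x2 x3 x4 x5 x6 * eval_mono6 n x1 x2 x3 x4 x5 x6.
Proof.
destruct m as [[[[[a1 a2] a3] a4] a5] a6], n as [[[[[b1 b2] b3] b4] b5] b6].
simpl; rewrite !pow_add; ring.
Qed.

Lemma eval_poly6_scale c m Q :
  ev (map (fun dn => (c * fst dn, mono6_mul m (snd dn))) Q)
  = c * eval_mono6 m x1 x2 x3 x4 x5 x6 * ev Q.
Proof.
induction Q as [|[d n] Q IH]; [unfold ev, eval_poly6; simpl; ring|].
cbn [map fst snd]; rewrite !eval_poly6_cons, IH, eval_mono6_mul; ring.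
Qed.

Lemma eval_poly6_mul P Q : ev (poly6_mul P Q) = ev P * ev Q.
Proof.
induction P as [|[c m] P IH]; [unfold ev, eval_poly6; simpl; ring|].
unfold poly6_mul in *; cbn [flat_map fst snd].
rewrite eval_poly6_add, IH, eval_poly6_scale, eval_poly6_cons; ring.
Qed.

Lemma eval_poly6_pow P n : ev (poly6_pow P n) = ev P ^ n.
Proof.
induction n as [|n IH]; simpl; [apply eval_poly6_const|].
rewrite eval_poly6_mul, IH; reflexivity.
Qed.

End Poly6Eval.

Declare Scope poly6_scope.
Delimit Scope poly6_scope with poly6.
Infix "+" := poly6_add : poly6_scope.
Infix "*" := poly6_mul : poly6_scope.
Infix "^" := poly6_pow : poly6_scope.
Notation "- P" := (poly6_opp P) : poly6_scope.
Notation "P - Q" := (poly6_add P (poly6_opp Q)) : poly6_scope.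

Section Genericity6.

Local Open Scope poly6_scope.

Definition rotc6 (cw sw c s : poly6) := c * cw + s * sw.
Definition rots6 (cw sw c s : poly6) := s * cw - c * sw.
Definition Lf6 (A B cw sw c s : poly6) := A * s - B * rots6 cw sw c s.
Definition Pf6 (A e1 c s : poly6) := A * e1 * s * c.
Definition Qf6 (B e2 cw sw c s : poly6) := B * e2 * rots6 cw sw c s * rotc6 cw sw c s.
Definition D1f6 (e1 c s : poly6) := c ^ 2 + s ^ 2 - e1 ^ 2 * s ^ 2.
Definition D2f6 (e2 cw sw c s : poly6) := c ^ 2 + s ^ 2 - e2 ^ 2 * rots6 cw sw c s ^ 2.

Definition genericity6 (p1 p2 e1 e2 cw sw : poly6) : poly6 :=
  let A := p1 * e1 * (poly6_const 1 - e2 ^ 2) in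
  let B := p2 * e2 * (poly6_const 1 - e1 ^ 2) in
  let zero := poly6_const 0 in let one := poly6_const 1 in
  let u := A - B * cw in let v := - (B * sw) in
  e1 * e2 * sw
  * (Lf6 A B cw sw zero one ^ 2 * D2f6 e2 cw sw zero one - Qf6 B e2 cw sw zero one ^ 2)
  * (Lf6 A B cw sw (- sw) cw ^ 2 * D1f6 e1 (- sw) cw - Pf6 A e1 (- sw) cw ^ 2)
  * (Pf6 A e1 u v ^ 2 * D2f6 e2 cw sw u v - Qf6 B e2 cw sw u v ^ 2 * D1f6 e1 u v).

End Genericity6.

Definition genericity_poly6 : poly6 :=
  genericity6 (poly6_mono (1, 0, 0, 0, 0, 0)%nat) (poly6_mono (0, 1, 0, 0, 0, 0)%nat)
    (poly6_mono (0, 0, 1, 0, 0, 0)%nat) (poly6_mono (0, 0, 0, 1, 0, 0)%nat)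
    (poly6_mono (0, 0, 0, 0, 1, 0)%nat) (poly6_mono (0, 0, 0, 0, 0, 1)%nat).

Lemma eval_genericity_poly6 p1 p2 e1 e2 cw sw :
  eval_poly6 genericity_poly6 p1 p2 e1 e2 cw sw = genericity p1 p2 e1 e2 cw sw.
Proof.
unfold genericity_poly6, genericity6, Lf6, Pf6, Qf6, D1f6, D2f6, rotc6, rots6.
repeat rewrite ?eval_poly6_mul, ?eval_poly6_add, ?eval_poly6_opp, ?eval_poly6_pow,
  ?eval_poly6_const, ?eval_poly6_mono.
unfold genericity, LQ_form, LP_form, PQ_form, Lf, Pf, Qf, D1f, D2f, rotc, rots; simpl; ring.
Qed.

Lemma genericity_sample : genericity 1 1 (1 / 2) (1 / 3) 0 1 <> 0.
Proof.
replace (genericity 1 1 (1 / 2) (1 / 3) 0 1) with (608285 / 2380311484416)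
  by (unfold genericity, LQ_form, LP_form, PQ_form, Lf, Pf, Qf, D1f, D2f, rotc, rots; field).
apply Rgt_not_eq, Rdiv_lt_0_compat; lra.
Qed.

Theorem mainTheorem3 :
  exists Q : poly6,
    (exists p1 e1 p2 e2 om2,
        admissible p1 e1 p2 e2 /\ nondegenerate Q p1 e1 p2 e2 om2) /\
    (forall p1 e1 p2 e2 om2,
        admissible p1 e1 p2 e2 -> nondegenerate Q p1 e1 p2 e2 om2 ->
        (forall l : list (R * R),
            NoDup l ->
            (forall f, In f l ->
               in_torus f /\ crit_pt p1 e1 p2 e2 om2 (fst f) (snd f) /\
               dist2 p1 e1 p2 e2 om2 (fst f) (snd f) <> 0) ->
            (length l <= 10)%nat) /\
        (forall l : list (R * R),
            NoDup l ->
            (forall f, In f l ->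
               in_torus f /\ crit_pt p1 e1 p2 e2 om2 (fst f) (snd f)) ->
            (length l <= 12)%nat)).
Proof.
exists genericity_poly6; unfold nondegenerate; split.
- exists 1, (1 / 2), 1, (1 / 3), (PI / 2); split; [unfold admissible; lra|].
  rewrite eval_genericity_poly6, cos_PI2, sin_PI2; exact genericity_sample.
- intros p1 e1 p2 e2 om2 hadm hgen; rewrite eval_genericity_poly6 in hgen.
  split; [apply noncollision_count | apply critical_count]; assumption.
Qed.
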